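(* Let $S$ be a dense subsemigroup of $((0,\infty),+)$, let $(X,\langle T_s\rangle_{s\in S})$ be a dynamical system and let $x,y\in X$. If $x$ and $y$ are proximal near zero, then there is a minimal left ideal $L$ of $O^{+}(S)$ such that $T_u(x)=T_u(y)$ for all $u\in L$.
   Context: ''Dense'' means dense in the usual topology of $(0,\infty)$. $\beta S$ is the Stone–Čech compactification of the discrete set $S$ (ultrafilters on $S$), with $+$ extended so that $(\beta S,+)$ is a compact right topological semigroup: $A\in p+q$ iff $\{x\in S:-x+A\in q\}\in p$, where $-x+A=\{y\in S:x+y\in A\}$. $O^{+}(S)=\{p\in\beta S: S\cap(0,\epsilon)\in p\text{ for every }\epsilon>0\}$, a compact right topological subsemigroup of $\beta S$. A dynamical system $(X,\langle T_s\rangle_{s\in S})$ consists of a compact Hausdorff space $X$ and continuous maps $T_s:X\to X$ with $T_s\circ T_t=T_{s+t}$. For $p\in\beta S$, $T_p(x)=p\text{-}\lim_{s\in S}T_s(x)$ (the continuous extension of $s\mapsto T_s$ to $\beta S$ into $X^X$); $T_p\circ T_q=T_{p+q}$. Points $x,y\in X$ are proximal near zero iff for every neighbourhood $U$ of the diagonal in $X\times X$ and every $\epsilon>0$ there exists $s\in S\cap(0,\epsilon)$ with $(T_s(x),T_s(y))\in U$. *)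

From Stdlib Require Import Reals List ClassicalEpsilon.
Open Scope R_scope.

Definition subsemigroup_pos (S : R -> Prop) : Prop :=
  (forall s, S s -> 0 < s) /\ (forall s t, S s -> S t -> S (s + t)).

Definition dense_pos (S : R -> Prop) : Prop :=
  forall a b, 0 < a -> a < b -> exists s, S s /\ a < s /\ s < b.

(* A subset A of S is represented by a predicate on R; an ultrafilter p on S
   is represented as a family of predicates on R that is an ultrafilter on R
   containing S (A in p iff A /\ S in p). *)
Definition is_ultrafilter (S : R -> Prop) (p : (R -> Prop) -> Prop) : Prop :=
  p S /\
  ~ p (fun _ => False) /\
  (forall A B : R -> Prop, p A -> (forall r, A r -> B r) -> p B) /\
  (forall A B : R -> Prop, p A -> p B -> p (fun r => A r /\ B r)) /\
  (forall A : R -> Prop, p A \/ p (fun r => ~ A r)).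

Definition uf_sum (S : R -> Prop) (p q : (R -> Prop) -> Prop) : (R -> Prop) -> Prop :=
  fun A => p (fun x => S x /\ q (fun y => A (x + y))).

Definition Oplus (S : R -> Prop) (p : (R -> Prop) -> Prop) : Prop :=
  is_ultrafilter S p /\
  forall eps, 0 < eps -> p (fun s => S s /\ 0 < s /\ s < eps).

Definition left_ideal (S : R -> Prop) (L : ((R -> Prop) -> Prop) -> Prop) : Prop :=
  (exists p, L p) /\
  (forall p, L p -> Oplus S p) /\
  (forall q p, Oplus S q -> L p -> L (uf_sum S q p)).

Definition minimal_left_ideal (S : R -> Prop) (L : ((R -> Prop) -> Prop) -> Prop) : Prop :=
  left_ideal S L /\
  forall L', left_ideal S L' -> (forall p, L' p -> L p) -> forall p, L p -> L' p.

Definition is_topology {X : Type} (open : (X -> Prop) -> Prop) : Prop :=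
  open (fun _ => True) /\ open (fun _ => False) /\
  (forall U V, open U -> open V -> open (fun z => U z /\ V z)) /\
  (forall F : (X -> Prop) -> Prop, (forall U, F U -> open U) ->
     open (fun z => exists U, F U /\ U z)).

Definition compact_space {X : Type} (open : (X -> Prop) -> Prop) : Prop :=
  forall F : (X -> Prop) -> Prop,
    (forall U, F U -> open U) -> (forall z, exists U, F U /\ U z) ->
    exists l : list (X -> Prop), (forall U, In U l -> F U) /\
                                 (forall z, exists U, In U l /\ U z).

Definition hausdorff {X : Type} (open : (X -> Prop) -> Prop) : Prop :=
  forall a b : X, a <> b -> exists U V, open U /\ open V /\ U a /\ V b /\
                                   (forall z, U z -> V z -> False).

Definition continuous {X : Type} (open : (X -> Prop) -> Prop) (f : X -> X) : Prop :=
  forall U, open U -> open (fun z => U (f z)).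

(* U is a neighbourhood of the diagonal in X x X (product topology):
   U contains an open set containing the diagonal, i.e. for each z a basic
   open rectangle around (z,z). *)
Definition diag_nbhd {X : Type} (open : (X -> Prop) -> Prop) (U : X -> X -> Prop) : Prop :=
  forall z, exists V W, open V /\ open W /\ V z /\ W z /\
                   (forall a b, V a -> W b -> U a b).

Definition dyn_system {X : Type} (open : (X -> Prop) -> Prop) (S : R -> Prop)
  (T : R -> X -> X) : Prop :=
  is_topology open /\ compact_space open /\ hausdorff open /\
  (forall s, S s -> continuous open (T s)) /\
  (forall s t z, S s -> S t -> T s (T t z) = T (s + t) z).

Definition is_plim {X : Type} (open : (X -> Prop) -> Prop) (S : R -> Prop)
  (p : (R -> Prop) -> Prop) (f : R -> X) (z : X) : Prop :=
  forall U, open U -> U z -> p (fun s => S s /\ U (f s)).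

(* T_p(x) = p-lim_{s in S} T_s(x)  (exists and is unique in a compact
   Hausdorff space; chosen by Hilbert's epsilon) *)
Definition Tp {X : Type} (open : (X -> Prop) -> Prop) (S : R -> Prop)
  (T : R -> X -> X) (p : (R -> Prop) -> Prop) (x : X) : X :=
  epsilon (inhabits x) (fun z => is_plim open S p (fun s => T s x) z).

Definition proximal_near_zero {X : Type} (open : (X -> Prop) -> Prop) (S : R -> Prop)
  (T : R -> X -> X) (x y : X) : Prop :=
  forall U, diag_nbhd open U -> forall eps, 0 < eps ->
    exists s, S s /\ 0 < s /\ s < eps /\ U (T s x) (T s y).

From Stdlib Require Import Reals List ClassicalEpsilon Classical FunctionalExtensionality PropExtensionality Lra.
From mathcomp Require boolp classical_sets.
Open Scope R_scope.

(* Proximality near zero says that the sets of small s in S with (T_s x, T_s y)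
   close to the diagonal form a filter base; an ultrafilter p containing it lies
   in O^+(S), and T_p x = T_p y because a compact Hausdorff space is regular, so
   distinct points are separated by the complement of a closed neighbourhood of
   the diagonal.  The left ideal O^+(S) + p is closed in beta S (it is the set of
   ultrafilters containing the intersection of all q + p), so by Zorn's lemma,
   with compactness of beta S in the guise of the ultrafilter lemma, it contains
   a minimal left ideal L.  Every u = q + p in L then satisfies
   T_u x = T_q (T_p x) = T_q (T_p y) = T_u y. *)

Definition is_filter (S : R -> Prop) (G : (R -> Prop) -> Prop) : Prop :=
  G S /\ ~ G (fun _ => False) /\
  (forall A B : R -> Prop, G A -> (forall r, A r -> B r) -> G B) /\
  (forall A B : R -> Prop, G A -> G B -> G (fun r => A r /\ B r)).

Definition chain {T : Type} (C : (T -> Prop) -> Prop) : Prop :=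
  forall B B', C B -> C B' -> (forall t, B t -> B' t) \/ (forall t, B' t -> B t).

Definition bigunion {T : Type} (C : (T -> Prop) -> Prop) : T -> Prop :=
  fun t => exists B, C B /\ B t.

Lemma zorn_subsets {T : Type} (P : (T -> Prop) -> Prop) (B0 : T -> Prop) :
  P B0 ->
  (forall C, (exists B, C B) -> (forall B, C B -> P B) -> chain C -> P (bigunion C)) ->
  exists M, P M /\ (forall t, B0 t -> M t) /\
    forall B, P B -> (forall t, M t -> B t) -> forall t, B t -> M t.
Proof.
intros PB0 P_union.
set (Above := fun B => P B /\ forall t, B0 t -> B t).
set (le := fun a b : sig Above => forall t, proj1_sig a t -> proj1_sig b t).
destruct (@classical_sets.ZL_preorder (sig Above) (exist _ B0 (conj PB0 (fun t h => h)))
            (fun a b => boolp.asbool (le a b))) as [[M [PM B0M]] Mmax].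
- intro a; apply boolp.asboolT; intros t h; exact h.
- intros a b c ab bc; apply boolp.asboolT; intros t h.
  exact (boolp.asboolW bc t (boolp.asboolW ab t h)).
- intros A A_chain. destruct (classic (exists a, A a)) as [[a0 Aa0] | A_empty].
  + set (C := fun B => exists a, A a /\ proj1_sig a = B).
    assert (AboveU : Above (bigunion C)).
    { split.
      - apply P_union.
        + exists (proj1_sig a0), a0; split; [exact Aa0 | reflexivity].
        + intros B [a [_ <-]]. exact (proj1 (proj2_sig a)).
        + intros B B' [a [Aa <-]] [b [Ab <-]].
          destruct (A_chain a b Aa Ab) as [ab | ba];
            [left; exact (boolp.asboolW ab) | right; exact (boolp.asboolW ba)].
      - intros t B0t. exists (proj1_sig a0); split; [exists a0; split; [exact Aa0 | reflexivity] |].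
        exact (proj2 (proj2_sig a0) t B0t). }
    exists (exist _ _ AboveU). intros a Aa. apply boolp.asboolT. intros t at_.
    exists (proj1_sig a); split; [exists a; split; [exact Aa | reflexivity] | exact at_].
  + exists (exist _ B0 (conj PB0 (fun t h => h))). intros a Aa. exfalso; eauto.
- exists M; split; [exact PM | split; [exact B0M |]].
  intros B PB MB.
  set (b := exist Above B (conj PB (fun t h => MB t (B0M t h)))).
  exact (boolp.asboolW (Mmax b (boolp.asboolT MB))).
Qed.

Lemma filter_bigunion (S : R -> Prop) (C : ((R -> Prop) -> Prop) -> Prop) :
  (exists G, C G) -> (forall G, C G -> is_filter S G) -> chain C ->
  is_filter S (bigunion C).
Proof.
intros [G0 CG0] C_filter C_chain.
split; [| split; [| split]].
- exists G0; split; [exact CG0 | exact (proj1 (C_filter G0 CG0))].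
- intros [G [CG GF]]. exact (proj1 (proj2 (C_filter G CG)) GF).
- intros A B [G [CG GA]] AB. exists G; split; [exact CG |].
  destruct (C_filter G CG) as (_ & _ & G_mono & _). exact (G_mono A B GA AB).
- intros A B [G [CG GA]] [G' [CG' G'B]].
  destruct (C_filter G CG) as (_ & _ & _ & G_and).
  destruct (C_filter G' CG') as (_ & _ & _ & G'_and).
  destruct (C_chain G G' CG CG') as [GG' | G'G].
  + exists G'; split; [exact CG' | exact (G'_and A B (GG' A GA) G'B)].
  + exists G; split; [exact CG | exact (G_and A B GA (G'G B G'B))].
Qed.

Lemma uf_carrier {S p} : is_ultrafilter S p -> p S.
Proof. intros (H & _); exact H. Qed.

Lemma uf_proper {S p} : is_ultrafilter S p -> ~ p (fun _ => False).
Proof. intros (_ & H & _); exact H. Qed.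

Lemma uf_mono {S p A B} : is_ultrafilter S p -> p A -> (forall r, A r -> B r) -> p B.
Proof. intros (_ & _ & H & _); apply H. Qed.

Lemma uf_and {S p A B} : is_ultrafilter S p -> p A -> p B -> p (fun r => A r /\ B r).
Proof. intros (_ & _ & _ & H & _); apply H. Qed.

Lemma uf_dec {S p} A : is_ultrafilter S p -> p A \/ p (fun r => ~ A r).
Proof. intros (_ & _ & _ & _ & H); apply H. Qed.

Lemma uf_compl {S p A} : is_ultrafilter S p -> ~ p A -> p (fun r => ~ A r).
Proof. intros Hp nA. destruct (uf_dec A Hp); tauto. Qed.

Lemma uf_inhabited {S p A} : is_ultrafilter S p -> p A -> exists r, A r.
Proof.
intros Hp HA. apply NNPP; intro A_empty. apply (uf_proper Hp).
apply (uf_mono Hp HA). intros r Ar; apply A_empty; exists r; exact Ar.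
Qed.

Lemma uf_list_union {S p} {I : Type} (l : list I) (A : I -> R -> Prop) :
  is_ultrafilter S p -> p (fun r => exists i, In i l /\ A i r) -> exists i, In i l /\ p (A i).
Proof.
intros Hp. induction l as [| i l IH]; intro Hunion.
- destruct (uf_inhabited Hp Hunion) as [r [i [[] _]]].
- destruct (uf_dec (A i) Hp) as [Hi | Hni]; [exists i; split; [left; reflexivity | exact Hi] |].
  destruct IH as [j [jl Hj]].
  + apply (uf_mono Hp (uf_and Hp Hunion Hni)).
    intros r [[j [[<- | jl] Hj]] Hn]; [contradiction | exists j; split; assumption].
  + exists j; split; [right; exact jl | exact Hj].
Qed.

Lemma ultrafilter_ext (p q : (R -> Prop) -> Prop) : (forall A, p A <-> q A) -> p = q.
Proof.
intro Hpq. apply functional_extensionality; intro A.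
apply propositional_extensionality; apply Hpq.
Qed.

Lemma ultrafilter_maximal {S p q} : is_ultrafilter S p -> is_ultrafilter S q ->
  (forall A, p A -> q A) -> p = q.
Proof.
intros Hp Hq pq. apply ultrafilter_ext; intro A; split; [apply pq |]. intro qA.
destruct (uf_dec A Hp) as [pA | pnA]; [exact pA |]. exfalso.
apply (uf_proper Hq). apply (uf_mono Hq (uf_and Hq qA (pq _ pnA))).
intros r [Ar nAr]; exact (nAr Ar).
Qed.

Lemma filter_extends_to_ultrafilter S G : is_filter S G ->
  exists p, is_ultrafilter S p /\ forall A, G A -> p A.
Proof.
intro HG.
destruct (zorn_subsets (is_filter S) G HG (filter_bigunion S)) as (M & HM & GM & Mmax).
exists M; split; [| exact GM].
destruct HM as (MS & M_proper & M_mono & M_and).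
split; [exact MS | split; [exact M_proper | split; [exact M_mono | split; [exact M_and |]]]].
intro A. destruct (classic (exists B, M B /\ forall r, B r -> ~ A r)) as [[B [MB BA]] | A_meets].
- right. exact (M_mono B _ MB BA).
- left. set (MA := fun C => exists B, M B /\ forall r, B r -> A r -> C r).
  assert (HMA : is_filter S MA).
  { split; [| split; [| split]].
    - exists S; split; [exact MS | intros r Sr _; exact Sr].
    - intros [B [MB BA]]. apply A_meets. exists B; split; [exact MB | exact BA].
    - intros C D [B [MB BC]] CD. exists B; split; [exact MB | intros r Br Ar; exact (CD r (BC r Br Ar))].
    - intros C D [B [MB BC]] [B' [MB' B'D]].
      exists (fun r => B r /\ B' r); split; [exact (M_and B B' MB MB') |].
      intros r [Br B'r] Ar; split; [exact (BC r Br Ar) | exact (B'D r B'r Ar)]. }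
  apply (Mmax MA HMA).
  + intros C MC. exists C; split; [exact MC | intros r Cr _; exact Cr].
  + exists S; split; [exact MS | intros r _ Ar; exact Ar].
Qed.

Definition orbit_filter (S : R -> Prop) (p : (R -> Prop) -> Prop) : (R -> Prop) -> Prop :=
  fun A => forall q, Oplus S q -> uf_sum S q p A.

Definition uf_hull (S : R -> Prop) (G : (R -> Prop) -> Prop) : ((R -> Prop) -> Prop) -> Prop :=
  fun r => is_ultrafilter S r /\ forall A, G A -> r A.

(* The sets of small x with -x + A in p, for A in r: an ultrafilter q containing
   them all satisfies q + p = r. *)
Definition left_factor_base (S : R -> Prop) (r p : (R -> Prop) -> Prop) : (R -> Prop) -> Prop :=
  fun C => exists A eps, r A /\ 0 < eps /\
    forall x, S x -> 0 < x -> x < eps -> p (fun y => A (x + y)) -> C x.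

Definition ideal_filter (S : R -> Prop) (G : (R -> Prop) -> Prop) : Prop :=
  is_filter S G /\ left_ideal S (uf_hull S G).

Section Ultrafilter_sum.

Variable S : R -> Prop.
Hypothesis S_add : forall s t, S s -> S t -> S (s + t).

Lemma uf_sum_ultrafilter q p : is_ultrafilter S q -> is_ultrafilter S p ->
  is_ultrafilter S (uf_sum S q p).
Proof.
intros Hq Hp. unfold uf_sum. split; [| split; [| split; [| split]]].
- apply (uf_mono Hq (uf_carrier Hq)). intros r Sr; split; [exact Sr |].
  apply (uf_mono Hp (uf_carrier Hp)). intros s Ss; exact (S_add r s Sr Ss).
- intro H. destruct (uf_inhabited Hq H) as [r [_ Hr]]. exact (uf_proper Hp Hr).
- intros A B HA AB. apply (uf_mono Hq HA). intros r [Sr Hr]. split; [exact Sr |].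
  apply (uf_mono Hp Hr). intro s; apply AB.
- intros A B HA HB. apply (uf_mono Hq (uf_and Hq HA HB)).
  intros r [[Sr HrA] [_ HrB]]. split; [exact Sr | exact (uf_and Hp HrA HrB)].
- intro A. destruct (uf_dec (fun x => S x /\ p (fun y => A (x + y))) Hq) as [H | H];
    [left; exact H | right].
  apply (uf_mono Hq (uf_and Hq (uf_carrier Hq) H)).
  intros r [Sr Hr]. split; [exact Sr |].
  apply (uf_compl Hp). intro HA; apply Hr; split; assumption.
Qed.

Lemma Oplus_sum q p : Oplus S q -> Oplus S p -> Oplus S (uf_sum S q p).
Proof.
intros [Hq Oq] [Hp Op]. split; [exact (uf_sum_ultrafilter q p Hq Hp) |].
intros eps Heps. unfold uf_sum.
apply (uf_mono Hq (Oq (eps / 2) ltac:(lra))). intros u (Su & u0 & u1). split; [exact Su |].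
apply (uf_mono Hp (Op (eps / 2) ltac:(lra))). intros v (Sv & v0 & v1).
split; [exact (S_add u v Su Sv) | lra].
Qed.

Lemma uf_sum_assoc s q p : is_ultrafilter S s -> is_ultrafilter S q -> is_ultrafilter S p ->
  uf_sum S s (uf_sum S q p) = uf_sum S (uf_sum S s q) p.
Proof.
intros Hs Hq Hp. apply ultrafilter_ext; intro A. unfold uf_sum. split; intro H.
- apply (uf_mono Hs H). intros x [Sx Hx]. split; [exact Sx |].
  apply (uf_mono Hq Hx). intros z [Sz Hz]. split; [exact (S_add x z Sx Sz) |].
  apply (uf_mono Hp Hz). intros w Hw. rewrite Rplus_assoc; exact Hw.
- apply (uf_mono Hs H). intros x [Sx Hx]. split; [exact Sx |].
  apply (uf_mono Hq (uf_and Hq (uf_carrier Hq) Hx)). intros z [Sz [_ Hz]]. split; [exact Sz |].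
  apply (uf_mono Hp Hz). intros w Hw. rewrite <- Rplus_assoc; exact Hw.
Qed.

Lemma orbit_filter_is_filter p : Oplus S p -> is_filter S (orbit_filter S p).
Proof.
intro Op.
assert (Hsum : forall q, Oplus S q -> is_ultrafilter S (uf_sum S q p))
  by (intros q Oq; exact (uf_sum_ultrafilter q p (proj1 Oq) (proj1 Op))).
split; [| split; [| split]].
- intros q Oq. exact (uf_carrier (Hsum q Oq)).
- intro H. exact (uf_proper (Hsum p Op) (H p Op)).
- intros A B HA AB q Oq. exact (uf_mono (Hsum q Oq) (HA q Oq) AB).
- intros A B HA HB q Oq. exact (uf_and (Hsum q Oq) (HA q Oq) (HB q Oq)).
Qed.

Lemma sum_in_orbit_hull q p : Oplus S q -> Oplus S p ->
  uf_hull S (orbit_filter S p) (uf_sum S q p).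
Proof.
intros Oq Op. split; [exact (uf_sum_ultrafilter q p (proj1 Oq) (proj1 Op)) |].
intros A HA; exact (HA q Oq).
Qed.

Lemma left_factor_base_filter p r : is_ultrafilter S p -> uf_hull S (orbit_filter S p) r ->
  is_filter S (left_factor_base S r p).
Proof.
intros Hp [Hr r_orbit]. split; [| split; [| split]].
- exists S, 1. split; [exact (uf_carrier Hr) | split; [lra |]]. intros x Sx _ _ _; exact Sx.
- intros (A & eps & rA & Heps & HA). apply (uf_proper Hr).
  assert (orbit_nA : orbit_filter S p (fun z => ~ A z)).
  { intros q [Hq Oq]. unfold uf_sum. apply (uf_mono Hq (Oq eps Heps)).
    intros x (Sx & x0 & x1). split; [exact Sx |].
    apply (uf_compl Hp). exact (HA x Sx x0 x1). }
  apply (uf_mono Hr (uf_and Hr rA (r_orbit _ orbit_nA))). intros z [Az nAz]; exact (nAz Az).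
- intros C D (A & eps & rA & Heps & HA) CD. exists A, eps.
  split; [exact rA | split; [exact Heps |]].
  intros x Sx x0 x1 Hx; exact (CD x (HA x Sx x0 x1 Hx)).
- intros C D (A & eps & rA & Heps & HA) (A' & eps' & rA' & Heps' & HA').
  exists (fun z => A z /\ A' z), (Rmin eps eps').
  split; [exact (uf_and Hr rA rA') | split; [apply Rmin_pos; assumption |]].
  intros x Sx x0 x1 Hx.
  assert (x_eps : x < eps) by exact (Rlt_le_trans _ _ _ x1 (Rmin_l _ _)).
  assert (x_eps' : x < eps') by exact (Rlt_le_trans _ _ _ x1 (Rmin_r _ _)).
  split; [apply (HA x Sx x0 x_eps) | apply (HA' x Sx x0 x_eps')];
    apply (uf_mono Hp Hx); intros y [Ay A'y]; assumption.
Qed.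

(* O^+(S) + p is closed in beta S. *)
Lemma orbit_hull_sum p r : is_ultrafilter S p -> uf_hull S (orbit_filter S p) r ->
  exists q, Oplus S q /\ r = uf_sum S q p.
Proof.
intros Hp Hr.
destruct (filter_extends_to_ultrafilter S _ (left_factor_base_filter p r Hp Hr))
  as [q [Hq q_base]].
assert (Oq : Oplus S q).
{ split; [exact Hq |]. intros eps Heps. apply q_base. exists S, eps.
  split; [exact (uf_carrier (proj1 Hr)) | split; [exact Heps |]].
  intros x Sx x0 x1 _; repeat split; assumption. }
exists q; split; [exact Oq |].
apply (ultrafilter_maximal (proj1 Hr) (uf_sum_ultrafilter q p Hq Hp)).
intros A rA. apply q_base. exists A, 1. split; [exact rA | split; [lra |]].
intros x Sx _ _ HA; split; assumption.
Qed.

Lemma orbit_hull_left_ideal p : Oplus S p -> left_ideal S (uf_hull S (orbit_filter S p)).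
Proof.
intro Op. split; [| split].
- exists (uf_sum S p p). exact (sum_in_orbit_hull p p Op Op).
- intros r Hr. destruct (orbit_hull_sum p r (proj1 Op) Hr) as [q [Oq ->]].
  exact (Oplus_sum q p Oq Op).
- intros s r Os Hr. destruct (orbit_hull_sum p r (proj1 Op) Hr) as [q [Oq ->]].
  rewrite (uf_sum_assoc s q p (proj1 Os) (proj1 Oq) (proj1 Op)).
  exact (sum_in_orbit_hull _ p (Oplus_sum s q Os Oq) Op).
Qed.

Lemma orbit_ideal_filter p : Oplus S p -> ideal_filter S (orbit_filter S p).
Proof. intro Op. exact (conj (orbit_filter_is_filter p Op) (orbit_hull_left_ideal p Op)). Qed.

(* The hull of a union of a chain of filters is the intersection of their hulls;
   it is nonempty by the ultrafilter lemma, i.e. by compactness of beta S. *)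
Lemma ideal_filter_bigunion C : (exists G, C G) -> (forall G, C G -> ideal_filter S G) ->
  chain C -> ideal_filter S (bigunion C).
Proof.
intros [G0 CG0] C_ideal C_chain.
assert (U_filter : is_filter S (bigunion C)).
{ apply filter_bigunion; [exists G0; exact CG0 | | exact C_chain].
  intros G CG; exact (proj1 (C_ideal G CG)). }
assert (hull_U : forall G r, C G -> uf_hull S (bigunion C) r -> uf_hull S G r).
{ intros G r CG [Hr rU]. split; [exact Hr |]. intros A GA. apply rU. exists G; split; assumption. }
split; [exact U_filter | split; [| split]].
- destruct (filter_extends_to_ultrafilter S _ U_filter) as [p [Hp pU]].
  exists p; split; assumption.
- intros r Hr. destruct (C_ideal G0 CG0) as (_ & _ & G0_Oplus & _).
  exact (G0_Oplus r (hull_U G0 r CG0 Hr)).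
- intros q r Oq Hr. split; [exact (uf_sum_ultrafilter q r (proj1 Oq) (proj1 Hr)) |].
  intros A [G [CG GA]]. destruct (C_ideal G CG) as (_ & _ & _ & G_closed).
  exact (proj2 (G_closed q r Oq (hull_U G r CG Hr)) A GA).
Qed.

Lemma hull_of_maximal_ideal_filter M : ideal_filter S M ->
  (forall G, ideal_filter S G -> (forall A, M A -> G A) -> forall A, G A -> M A) ->
  minimal_left_ideal S (uf_hull S M).
Proof.
intros [_ M_ideal] M_max. split; [exact M_ideal |].
intros L [[p Lp] [L_Oplus L_closed]] L_M r [Hr rM].
assert (Op : Oplus S p) by exact (L_Oplus p Lp).
assert (M_orbit : forall A, M A -> orbit_filter S p A).
{ intros A MA q Oq. exact (proj2 (L_M _ (L_closed q p Oq Lp)) A MA). }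
destruct (orbit_hull_sum p r (proj1 Op)) as [q [Oq ->]].
- split; [exact Hr |]. intros A HA. exact (rM A (M_max _ (orbit_ideal_filter p Op) M_orbit A HA)).
- exact (L_closed q p Oq Lp).
Qed.

Lemma minimal_left_ideal_in_orbit p : Oplus S p ->
  exists L, minimal_left_ideal S L /\ forall u, L u -> exists q, Oplus S q /\ u = uf_sum S q p.
Proof.
intro Op.
destruct (zorn_subsets (ideal_filter S) (orbit_filter S p) (orbit_ideal_filter p Op)
            ideal_filter_bigunion) as (M & M_ideal & orbit_M & M_max).
exists (uf_hull S M). split; [exact (hull_of_maximal_ideal_filter M M_ideal M_max) |].
intros u [Hu uM]. apply (orbit_hull_sum p u (proj1 Op)).
split; [exact Hu |]. intros A HA; exact (uM A (orbit_M A HA)).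
Qed.

End Ultrafilter_sum.

Lemma plim_unique {X : Type} (open : (X -> Prop) -> Prop) S p (f : R -> X) z1 z2 :
  hausdorff open -> is_ultrafilter S p -> is_plim open S p f z1 -> is_plim open S p f z2 ->
  z1 = z2.
Proof.
intros Hhaus Hp H1 H2. apply NNPP; intro Hne.
destruct (Hhaus z1 z2 Hne) as (U & V & oU & oV & Uz1 & Vz2 & UV).
destruct (uf_inhabited Hp (uf_and Hp (H1 U oU Uz1) (H2 V oV Vz2))) as [s [[_ Us] [_ Vs]]].
exact (UV _ Us Vs).
Qed.

Lemma plim_exists {X : Type} (open : (X -> Prop) -> Prop) S p (f : R -> X) :
  compact_space open -> is_ultrafilter S p -> exists z, is_plim open S p f z.
Proof.
intros Hcomp Hp. apply NNPP; intro no_lim.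
destruct (Hcomp (fun U => open U /\ ~ p (fun s => S s /\ U (f s)))) as [l [l_small l_cover]].
- intros U [oU _]; exact oU.
- intro z. apply NNPP; intro Hz. apply no_lim. exists z. intros U oU Uz.
  apply NNPP; intro HU. apply Hz. exists U; split; [split; assumption | exact Uz].
- destruct (uf_list_union l (fun U s => S s /\ U (f s)) Hp) as [U [Ul HU]].
  + apply (uf_mono Hp (uf_carrier Hp)). intros s Ss.
    destruct (l_cover (f s)) as [U [Ul Ufs]]. exists U; split; [exact Ul | split; assumption].
  + exact (proj2 (l_small U Ul) HU).
Qed.

Lemma Tp_is_plim {X : Type} (open : (X -> Prop) -> Prop) S T p z :
  compact_space open -> is_ultrafilter S p ->
  is_plim open S p (fun s => T s z) (Tp open S T p z).
Proof. intros Hcomp Hp. unfold Tp. apply epsilon_spec. exact (plim_exists open S p _ Hcomp Hp). Qed.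

Lemma Tp_sum {X : Type} (open : (X -> Prop) -> Prop) S T q p x :
  (forall s t, S s -> S t -> S (s + t)) -> dyn_system open S T ->
  is_ultrafilter S q -> is_ultrafilter S p ->
  Tp open S T (uf_sum S q p) x = Tp open S T q (Tp open S T p x).
Proof.
intros S_add (_ & Hcomp & Hhaus & T_cont & T_law) Hq Hp.
apply (plim_unique open S (uf_sum S q p) (fun s => T s x));
  [exact Hhaus | exact (uf_sum_ultrafilter S S_add q p Hq Hp) |
   exact (Tp_is_plim open S T _ x Hcomp (uf_sum_ultrafilter S S_add q p Hq Hp)) |].
intros U oU HU. unfold uf_sum.
apply (uf_mono Hq (Tp_is_plim open S T q (Tp open S T p x) Hcomp Hq U oU HU)).
intros u [Su Uu]. split; [exact Su |].
apply (uf_mono Hp (Tp_is_plim open S T p x Hcomp Hp _ (T_cont u Su U oU) Uu)).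
intros v [Sv Hv]. split; [exact (S_add u v Su Sv) |]. rewrite <- T_law by assumption. exact Hv.
Qed.

Lemma open_nbhd_avoiding {X : Type} (open : (X -> Prop) -> Prop) (a : X)
  (Q : (X -> Prop) -> Prop) (l : list (X -> Prop)) :
  is_topology open ->
  (forall U, In U l -> Q U \/ exists V, open V /\ V a /\ forall u, U u -> V u -> False) ->
  exists V, open V /\ V a /\ forall U, In U l -> Q U \/ forall u, U u -> V u -> False.
Proof.
intros (o_full & _ & o_and & _). induction l as [| U l IH]; intro Hl.
- exists (fun _ => True); split; [exact o_full | split; [exact I | intros U []]].
- destruct IH as (V & oV & Va & HV); [intros U' U'l; apply Hl; right; exact U'l |].
  destruct (Hl U (or_introl eq_refl)) as [QU | (V' & oV' & V'a & UV')].
  + exists V; split; [exact oV | split; [exact Va |]].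
    intros U' [<- | U'l]; [left; exact QU | exact (HV U' U'l)].
  + exists (fun z => V z /\ V' z); split; [exact (o_and V V' oV oV') | split; [split; assumption |]].
    intros U' [<- | U'l].
    * right; intros u Uu [_ V'u]; exact (UV' u Uu V'u).
    * destruct (HV U' U'l) as [QU' | U'V]; [left; exact QU' |].
      right; intros u U'u [Vu _]; exact (U'V u U'u Vu).
Qed.

(* The closure of V lies in O. *)
Lemma compact_hausdorff_regular {X : Type} (open : (X -> Prop) -> Prop) (a : X) (O : X -> Prop) :
  is_topology open -> compact_space open -> hausdorff open -> open O -> O a ->
  exists V, open V /\ V a /\
    forall t, ~ O t -> exists N, open N /\ N t /\ forall u, N u -> V u -> False.
Proof.
intros Htop Hcomp Hhaus oO Oa.
set (Q := fun U : X -> Prop => forall t, U t -> O t).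
destruct (Hcomp (fun U => open U /\ (Q U \/
      exists V, open V /\ V a /\ forall u, U u -> V u -> False))) as [l [l_good l_cover]].
- intros U [oU _]; exact oU.
- intro z. destruct (classic (O z)) as [Oz | nOz].
  + exists O; split; [split; [exact oO | left; intros t Ot; exact Ot] | exact Oz].
  + assert (az : a <> z) by (intros <-; exact (nOz Oa)).
    destruct (Hhaus a z az) as (V & N & oV & oN & Va & Nz & VN).
    exists N; split; [| exact Nz]. split; [exact oN |].
    right; exists V; split; [exact oV | split; [exact Va | intros u Nu Vu; exact (VN u Vu Nu)]].
- destruct (open_nbhd_avoiding open a Q l Htop) as (V & oV & Va & HV).
  { intros U Ul; exact (proj2 (l_good U Ul)). }
  exists V; split; [exact oV | split; [exact Va |]]. intros t nOt.
  destruct (l_cover t) as [U [Ul Ut]]. exists U.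
  split; [exact (proj1 (l_good U Ul)) | split; [exact Ut |]].
  destruct (HV U Ul) as [QU | UV]; [exfalso; exact (nOt (QU t Ut)) | exact UV].
Qed.

Lemma diag_nbhd_full {X : Type} (open : (X -> Prop) -> Prop) :
  is_topology open -> diag_nbhd open (fun _ _ => True).
Proof.
intros (o_full & _). intro z.
exists (fun _ => True), (fun _ => True); repeat split; exact o_full.
Qed.

Lemma diag_nbhd_and {X : Type} (open : (X -> Prop) -> Prop) (U U' : X -> X -> Prop) :
  is_topology open -> diag_nbhd open U -> diag_nbhd open U' ->
  diag_nbhd open (fun u v => U u v /\ U' u v).
Proof.
intros (_ & _ & o_and & _) HU HU' z.
destruct (HU z) as (V & W & oV & oW & Vz & Wz & VW).
destruct (HU' z) as (V' & W' & oV' & oW' & V'z & W'z & VW').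
exists (fun u => V u /\ V' u), (fun u => W u /\ W' u).
split; [exact (o_and V V' oV oV') | split; [exact (o_and W W' oW oW') |]].
split; [split; assumption | split; [split; assumption |]].
intros u v [Vu V'u] [Wv W'v]; split; [exact (VW u v Vu Wv) | exact (VW' u v V'u W'v)].
Qed.

Lemma diag_nbhd_avoiding_pair {X : Type} (open : (X -> Prop) -> Prop) (a b : X) :
  is_topology open -> compact_space open -> hausdorff open -> a <> b ->
  exists V W, open V /\ open W /\ V a /\ W b /\ diag_nbhd open (fun u v => ~ (V u /\ W v)).
Proof.
intros Htop Hcomp Hhaus ab.
destruct (Hhaus a b ab) as (Oa & Ob & oOa & oOb & Oa_a & Ob_b & OaOb).
destruct (compact_hausdorff_regular open a Oa Htop Hcomp Hhaus oOa Oa_a) as (V & oV & Va & V_cl).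
destruct (compact_hausdorff_regular open b Ob Htop Hcomp Hhaus oOb Ob_b) as (W & oW & Wb & W_cl).
destruct Htop as (o_full & _).
exists V, W; split; [exact oV | split; [exact oW | split; [exact Va | split; [exact Wb |]]]].
intro z. destruct (classic (Oa z)) as [Oa_z | nOa_z].
- destruct (W_cl z (fun Ob_z => OaOb z Oa_z Ob_z)) as (N & oN & Nz & NW).
  exists (fun _ => True), N; repeat split; [exact o_full | exact oN | exact Nz |].
  intros u v _ Nv [_ Wv]; exact (NW v Nv Wv).
- destruct (V_cl z nOa_z) as (N & oN & Nz & NV).
  exists N, (fun _ => True); repeat split; [exact oN | exact o_full | exact Nz |].
  intros u v Nu _ [Vu _]; exact (NV u Nu Vu).
Qed.

Definition proximal_base {X : Type} (open : (X -> Prop) -> Prop) (S : R -> Prop)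
  (T : R -> X -> X) (x y : X) : (R -> Prop) -> Prop :=
  fun A => exists U eps, diag_nbhd open U /\ 0 < eps /\
    forall r, S r -> 0 < r -> r < eps -> U (T r x) (T r y) -> A r.

Lemma proximal_base_filter {X : Type} (open : (X -> Prop) -> Prop) S T (x y : X) :
  is_topology open -> proximal_near_zero open S T x y -> is_filter S (proximal_base open S T x y).
Proof.
intros Htop Hprox. split; [| split; [| split]].
- exists (fun _ _ => True), 1. split; [exact (diag_nbhd_full open Htop) | split; [lra |]].
  intros r Sr _ _ _; exact Sr.
- intros (U & eps & HU & Heps & H). destruct (Hprox U HU eps Heps) as (s & Ss & s0 & s1 & Us).
  exact (H s Ss s0 s1 Us).
- intros A B (U & eps & HU & Heps & H) AB. exists U, eps.
  split; [exact HU | split; [exact Heps |]].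
  intros r Sr r0 r1 Ur; exact (AB r (H r Sr r0 r1 Ur)).
- intros A B (U & eps & HU & Heps & H) (U' & eps' & HU' & Heps' & H').
  exists (fun u v => U u v /\ U' u v), (Rmin eps eps').
  split; [exact (diag_nbhd_and open U U' Htop HU HU') | split; [apply Rmin_pos; assumption |]].
  intros r Sr r0 r1 [Ur U'r]. split.
  + exact (H r Sr r0 (Rlt_le_trans _ _ _ r1 (Rmin_l _ _)) Ur).
  + exact (H' r Sr r0 (Rlt_le_trans _ _ _ r1 (Rmin_r _ _)) U'r).
Qed.

Lemma proximal_Tp_eq {X : Type} (open : (X -> Prop) -> Prop) S T (x y : X) :
  is_topology open -> compact_space open -> hausdorff open ->
  proximal_near_zero open S T x y ->
  exists p, Oplus S p /\ Tp open S T p x = Tp open S T p y.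
Proof.
intros Htop Hcomp Hhaus Hprox.
destruct (filter_extends_to_ultrafilter S _ (proximal_base_filter open S T x y Htop Hprox))
  as [p [Hp p_base]].
exists p. split.
- split; [exact Hp |]. intros eps Heps. apply p_base.
  exists (fun _ _ => True), eps. split; [exact (diag_nbhd_full open Htop) | split; [exact Heps |]].
  intros r Sr r0 r1 _; repeat split; assumption.
- apply NNPP; intro Hne.
  destruct (diag_nbhd_avoiding_pair open _ _ Htop Hcomp Hhaus Hne) as (V & W & oV & oW & Vx & Wy & VW).
  assert (near_V := Tp_is_plim open S T p x Hcomp Hp V oV Vx).
  assert (near_W := Tp_is_plim open S T p y Hcomp Hp W oW Wy).
  assert (off_VW : p (fun r => ~ (V (T r x) /\ W (T r y)))).
  { apply p_base. exists (fun u v => ~ (V u /\ W v)), 1.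
    split; [exact VW | split; [lra |]]. intros r _ _ _ H; exact H. }
  destruct (uf_inhabited Hp (uf_and Hp off_VW (uf_and Hp near_V near_W)))
    as [r [Hn [[_ Vr] [_ Wr]]]].
  exact (Hn (conj Vr Wr)).
Qed.

Theorem lemma2p9 (S : R -> Prop) (X : Type) (open : (X -> Prop) -> Prop)
  (T : R -> X -> X) (x y : X) :
  subsemigroup_pos S -> dense_pos S -> dyn_system open S T ->
  proximal_near_zero open S T x y ->
  exists L, minimal_left_ideal S L /\
    forall u, L u -> Tp open S T u x = Tp open S T u y.
Proof.
intros [_ S_add] _ Hdyn Hprox.
pose proof Hdyn as (Htop & Hcomp & Hhaus & _).
destruct (proximal_Tp_eq open S T x y Htop Hcomp Hhaus Hprox) as [p [Op Tp_xy]].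
destruct (minimal_left_ideal_in_orbit S S_add p Op) as [L [L_min L_orbit]].
exists L; split; [exact L_min |].
intros u Lu. destruct (L_orbit u Lu) as [q [Oq ->]].
rewrite !(Tp_sum open S T q p _ S_add Hdyn (proj1 Oq) (proj1 Op)), Tp_xy.
reflexivity.
Qed.
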